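(* There exists a strongly bilevel feasible $w$ that is optimal to the NPP, i.e. there exist $w$ strongly bilevel feasible and $t$ such that $(w,t)$ is an optimal solution of the conjugate bilevel program $\max_{w,t}\{w^\top t: w\ge0,\ t\in\mathbf{T}(w)\}$.
   Context: Single-commodity network pricing setting: $G=(\mathcal{V},\mathcal{A})$ directed graph, arc costs $c\ge0$, nonempty tolled arc set $\mathcal{A}_1\subsetneq\mathcal{A}$, $n=|\mathcal{A}_1|$, $N$ node–arc incidence matrix, single origin $o$ and destination $d$ connected by a toll-free path, $b_o=1$, $b_d=-1$, $b_i=0$ otherwise, $\mathcal{X}=\{x\in\mathbb{R}^{\mathcal{A}}: Nx=b,\ x\ge0\}$, $x_{\mathcal{A}_1}$ the restriction of $x$ to $\mathcal{A}_1$; tolls $t\in\mathbb{R}^n$ are extended by zeros to $\bar t\in\mathbb{R}^{\mathcal{A}}$. Let $f(t)=\min\{c^\top x+t^\top x_{\mathcal{A}_1}: x\in\mathcal{X}\}$ for $t\ge0$, $f(t)=-\infty$ otherwise, and $g(w)=\sup_{t\in\mathbb{R}^n}\{f(t)-t^\top w\}$. A vector $w\ge0$ is strongly bilevel feasible when $\{w\}$ is the projection onto $w$-space of a face of $\operatorname{epi}(g)$ whose affine hull's direction space does not contain $(0,1)$. For $w\ge0$, $\mathbf{T}(w)$ is the set of $t$ that are parts of optimal solutions $(t,y)$ of $\max_{t,y}\{b^\top y-w^\top t: N^\top y-\bar t\le c,\ t\ge0\}$. The NPP here is $\max_{t\ge0,x}\{t^\top x_{\mathcal{A}_1}: x\in\arg\min_{x'\in\mathcal{X}}(c^\top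 x'+t^\top x'_{\mathcal{A}_1})\}$, whose optimal value equals that of the conjugate bilevel program. *)

From HB Require Import structures.
From mathcomp Require Import all_boot all_order all_algebra.
From mathcomp Require Import boolp classical_sets reals constructive_ereal ereal.

Set Implicit Arguments.
Unset Strict Implicit.
Unset Printing Implicit Defensive.

Import Order.TTheory GRing.Theory Num.Theory.
Local Open Scope ring_scope.
Local Open Scope classical_set_scope.

Section NPP.
Context {R : realType} {V A : finType} (tail head : A -> V) (c : A -> R)
  (A1 : {set A}) (o d : V).

(* index type of the tolled arcs A_1 (so R^n with n = |A_1| is tarc -> R) *)
Definition tarc := {a : A | a \in A1}.

(* node-arc incidence matrix: +1 at the tail, -1 at the head of an arc *)
Definition inc (v : V) (a : A) : R := (tail a == v)%:R - (head a == v)%:R.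

Definition bvec (v : V) : R := (v == o)%:R - (v == d)%:R.

Definition flowX : set (A -> R) :=
  [set x | (forall v, \sum_(a : A) inc v a * x a = bvec v) /\ (forall a, 0 <= x a)].

Definition restr (x : A -> R) : tarc -> R := fun i => x (val i).

Definition ext (t : tarc -> R) : A -> R := fun a => oapp t 0 (insub a).

Definition dotT (u v : tarc -> R) : R := \sum_(i : tarc) u i * v i.

Definition f_val (t : tarc -> R) : \bar R :=
  if `[< forall i, 0 <= t i >] then
    ereal_inf [set ((\sum_(a : A) c a * x a) + dotT t (restr x))%:E | x in flowX]
  else -oo%E.

Definition g_val (w : tarc -> R) : \bar R :=
  ereal_sup [set (f_val t - (dotT t w)%:E)%E | t in [set: tarc -> R]].

Definition pt := ((tarc -> R) * R)%type.

Definition epi_g : set pt := [set p | (g_val p.1 <= p.2%:E)%E].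

Definition comb (l : R) (p q : pt) : pt :=
  (fun i => l * p.1 i + (1 - l) * q.1 i, l * p.2 + (1 - l) * q.2).

Definition is_face (C F : set pt) : Prop :=
  F `<=` C /\
  (forall p q l, F p -> F q -> 0 <= l <= 1 -> F (comb l p q)) /\
  (forall p q l, C p -> C q -> 0 < l < 1 -> F (comb l p q) -> F p /\ F q).

Definition aff (F : set pt) : set pt :=
  [set z | exists (m : nat) (p : 'I_m -> pt) (lam : 'I_m -> R),
     (forall k, F (p k)) /\ \sum_(k < m) lam k = 1 /\
     z = (fun i => \sum_(k < m) lam k * (p k).1 i, \sum_(k < m) lam k * (p k).2)].

Definition dir_aff (F : set pt) : set pt :=
  [set z | exists u v, aff F u /\ aff F v /\
     z = (fun i => u.1 i - v.1 i, u.2 - v.2)].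

Definition e_last : pt := (fun _ => 0, 1).

Definition proj_w (F : set pt) : set (tarc -> R) := [set w | exists r, F (w, r)].

Definition strongly_bilevel_feasible (w : tarc -> R) : Prop :=
  (forall i, 0 <= w i) /\
  exists F : set pt, is_face epi_g F /\ proj_w F = [set w] /\ ~ dir_aff F e_last.

Definition lp_feas (t : tarc -> R) (y : V -> R) : Prop :=
  (forall i, 0 <= t i) /\
  (forall a, \sum_(v : V) inc v a * y v - ext t a <= c a).

Definition lp_obj (w t : tarc -> R) (y : V -> R) : R :=
  \sum_(v : V) bvec v * y v - dotT w t.

Definition Tset (w : tarc -> R) : set (tarc -> R) :=
  [set t | exists y, lp_feas t y /\
     forall t' y', lp_feas t' y' -> lp_obj w t' y' <= lp_obj w t y].

Definition cbp_optimal (w t : tarc -> R) : Prop :=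
  (forall i, 0 <= w i) /\ Tset w t /\
  forall w' t', (forall i, 0 <= w' i) -> Tset w' t' -> dotT w' t' <= dotT w t.

Fixpoint walk (u : V) (s : seq A) (v : V) : Prop :=
  match s with
  | [::] => u = v
  | a :: s' => tail a = u /\ walk (head a) s' v
  end.

Definition toll_free_path : Prop :=
  exists s : seq A, walk o s d /\ all (fun a => a \notin A1) s.

End NPP.

From Pilot Require Import Defs.
From HB Require Import structures.
From mathcomp Require Import all_boot all_order all_algebra.
From mathcomp Require Import boolp classical_sets reals constructive_ereal ereal.
From mathcomp Require Import ring lra.
Import Order.TTheory GRing.Theory Num.Theory.

Set Implicit Arguments.
Unset Strict Implicit.
Unset Printing Implicit Defensive.

(* Among the pairs of a simple o-d walk [P] and a toll [t >= 0] making [P]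
   shortest, one has maximal revenue [t(P)]: there are finitely many walks,
   and for each the best toll is read off a shortest-path potential of an
   auxiliary graph.  Among those we take [P] with fewest tolled arcs.
   Optimality of [(w, t)], [w] the arc count of [P], holds because every
   [t' in T(w')] makes some walk [Q] shortest with [w'^T t' <= t'(Q)].
   Strong bilevel feasibility holds because [(w, cost P)] is an extreme point
   of [epi g]: each coordinate is pinned by a toll pricing the arcs off [P] out
   while keeping [P] shortest, and this is where the minimality of [P] enters. *)

Local Open Scope ring_scope.

Section RealFacts.
Variable R : realDomainType.

Lemma seq_argmin (T : eqType) (s : seq T) (F : T -> R) : s != [::] ->
  exists2 x, x \in s & forall y, y \in s -> F x <= F y.
Proof.
elim: s => [|a s IH] // _.
have [->|/IH [x xs xmin]] := eqVneq s [::].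
  by exists a; rewrite ?inE // => y; rewrite inE => /eqP ->.
have [Fax|Fxa] := leP (F a) (F x).
  exists a; rewrite ?inE ?eqxx // => y; rewrite inE => /predU1P [->//|/xmin].
  exact: le_trans.
exists x; first by rewrite inE xs orbT.
by move=> y; rewrite inE => /predU1P [->|/xmin //]; apply: ltW.
Qed.

Lemma seq_argmax_attained (T : eqType) (U : Type) (s : seq T)
    (ok : T -> U -> Prop) (F : T -> U -> R) :
  (forall x u, ok x u -> exists2 v, ok x v & forall u', ok x u' -> F x u' <= F x v) ->
  forall x0 u0, x0 \in s -> ok x0 u0 ->
  exists x u, [/\ x \in s, ok x u & forall x' u', x' \in s -> ok x' u' -> F x' u' <= F x u].
Proof.
move=> attained x0 u0 x0s x0u0.
have best x : exists v, (exists u, ok x u) -> ok x v /\ forall u', ok x u' -> F x u' <= F x v.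
  have [[u /attained [v xv vmax]]|none] := pselect (exists u, ok x u); first by exists v.
  by exists u0 => /none.
have [v vP] := choice best.
pose s' := [seq x <- s | `[< exists u, ok x u >]].
have x0s' : x0 \in s' by rewrite mem_filter x0s andbT; apply/asboolP; exists u0.
have s'_nil : s' != [::] by apply/eqP => s'0; rewrite s'0 in x0s'.
have [x] := seq_argmin (fun x => - F x (v x)) s'_nil.
rewrite mem_filter => /andP [/asboolP xok xs] xmax.
have [xv _] := vP x xok; exists x, (v x); split=> // x' u' x's x'u'.
have x's' : x' \in s' by rewrite mem_filter x's andbT; apply/asboolP; exists u'.
have [_ /(_ u' x'u')] := vP x' (ex_intro _ u' x'u').
by move/le_trans; apply; rewrite -lerN2 xmax.
Qed.

Lemma seq_pos_lower_bound (T : eqType) (s : seq T) (G : T -> R) :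
  exists2 g, 0 < g & forall x, x \in s -> 0 < G x -> g <= G x.
Proof.
elim: s => [|a s [g g_gt0 gP]]; first by exists 1.
have [Ga_gt0|Ga_le0] := ltP 0 (G a).
  exists (Num.min g (G a)); first by rewrite lt_min g_gt0 Ga_gt0.
  move=> x; rewrite inE => /predU1P [-> _|xs Gx_gt0]; rewrite ge_min ?lexx ?orbT //.
  by rewrite gP.
exists g => // x; rewrite inE => /predU1P [-> Ga_gt0|]; last exact: gP.
by move: Ga_le0; rewrite leNgt Ga_gt0.
Qed.

Lemma sum_seq_ge_mem (T : eqType) (s : seq T) (F : T -> R) x :
  (forall a, 0 <= F a) -> x \in s -> F x <= \sum_(a <- s) F a.
Proof.
move=> F_ge0; elim: s => [|b s IH] //; rewrite inE big_cons => /predU1P [->|/IH].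
  by rewrite lerDl sumr_ge0.
by move/le_trans; apply; rewrite lerDr.
Qed.

Lemma sum_seq_pred1 (T : eqType) (s : seq T) x (e : R) :
  \sum_(a <- s) (if a == x then e else 0) = (count_mem x s)%:R * e.
Proof.
elim: s => [|b s IH]; first by rewrite big_nil mul0r.
by rewrite big_cons IH /= natrD mulrDl; case: (b == x); rewrite ?mul1r ?mul0r.
Qed.

Lemma sum_delta (T : finType) (j : T) (F : T -> R) : \sum_i (i == j)%:R * F i = F j.
Proof.
rewrite (bigD1 j) //= eqxx mul1r big1 ?addr0 // => i.
by move=> /negbTE ->; rewrite mul0r.
Qed.

Lemma convex_comb_eq0 (l a b : R) : 0 < l < 1 -> 0 <= a -> 0 <= b ->
  l * a + (1 - l) * b = 0 -> a = 0.
Proof.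
move=> /andP [l_gt0 l_lt1] a_ge0 b_ge0 ab0.
have la_ge0 : 0 <= l * a by rewrite mulr_ge0 // ltW.
have lb_ge0 : 0 <= (1 - l) * b by rewrite mulr_ge0 // subr_ge0 ltW.
have : l * a = 0 by lra.
by move/eqP; rewrite mulf_eq0 gt_eqF //= => /eqP.
Qed.

Lemma convex_comb_eq (l x y : R) : l < 1 -> l * x + (1 - l) * y = x -> y = x.
Proof.
move=> l_lt1 comb_x; have : (1 - l) * (y - x) = 0 by rewrite mulrBr; lra.
by move/eqP; rewrite mulf_eq0 subr_eq0 gt_eqF ?subr_gt0 //= subr_eq0 => /eqP.
Qed.

End RealFacts.

Section Walks.
Variables (V E : finType) (tl hd : E -> V).
Local Notation walk := (@walk V E tl hd).

Fixpoint walkb (u : V) (s : seq E) (v : V) : bool :=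
  if s is e :: s' then (tl e == u) && walkb (hd e) s' v else u == v.

Lemma walkP u s v : walk u s v <-> walkb u s v.
Proof.
elim: s u => [|e s IH] u /=; first by split=> [->|/eqP].
by split=> [[-> /IH ->]|/andP [/eqP -> /IH]]; rewrite ?eqxx.
Qed.

Definition simple_walk (u : V) (s : seq E) := uniq (u :: map hd s).

Lemma simple_walk_size u s : simple_walk u s -> (size s < #|V|)%N.
Proof.
move=> /card_uniqP card_s; have := max_card (mem (u :: map hd s)).
by rewrite card_s /= size_map.
Qed.

Lemma simple_walk_uniq u s : simple_walk u s -> uniq s.
Proof. by move=> /andP [_ /map_uniq]. Qed.

Fixpoint seqs_upto (n : nat) : seq (seq E) :=
  if n is n'.+1 then [::] :: [seq e :: s | e <- enum E, s <- seqs_upto n']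
  else [:: [::]].

Lemma mem_seqs_upto n s : (size s <= n)%N -> s \in seqs_upto n.
Proof.
elim: n s => [|n IH] [|e s] //=; rewrite ?inE ?eqxx // ltnS => size_s.
by apply/predU1P; right; apply: (allpairs_f (fun e s => e :: s)); rewrite ?mem_enum ?IH.
Qed.

Definition simple_walks (u v : V) : seq (seq E) :=
  [seq s <- seqs_upto #|V| | walkb u s v && simple_walk u s].

Lemma mem_simple_walks u v s : s \in simple_walks u v <-> walk u s v /\ simple_walk u s.
Proof.
rewrite mem_filter; split=> [/andP [/andP [/walkP ? ?] _] //|[/walkP ws ss]].
by rewrite ws ss mem_seqs_upto // ltnW // (simple_walk_size ss).
Qed.

Lemma walk_split_at u v s x : walk u s v -> x \in u :: map hd s ->
  exists p q pre, [/\ s = p ++ q, walk u p x, walk x q v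
                    & u :: map hd s = pre ++ x :: map hd q].
Proof.
elim: s u => [|e s IH] u /=.
  by move=> ->; rewrite inE => /eqP ->; exists [::], [::], [::].
move=> [tl_e ws]; rewrite inE => /predU1P [->|xs].
  by exists [::], (e :: s), [::].
have [p [q [pre [-> wp wq nodes]]]] := IH _ ws xs.
by exists (e :: p), q, (u :: pre); rewrite /= nodes.
Qed.

Section Lengths.
Variable R : realDomainType.

Lemma walk_telescope (y : V -> R) u s v : walk u s v ->
  \sum_(e <- s) (y (tl e) - y (hd e)) = y u - y v.
Proof.
elim: s u => [|e s IH] u /=; first by move=> ->; rewrite big_nil subrr.
by move=> [<- /IH ws]; rewrite big_cons ws addrA subrK.
Qed.

Lemma potential_le_walk (l : E -> R) (y : V -> R) u s v :
  (forall e, y (tl e) - y (hd e) <= l e) -> walk u s v ->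
  y u - y v <= \sum_(e <- s) l e.
Proof. by move=> yl ws; rewrite -(walk_telescope y ws); apply: ler_sum. Qed.

Lemma walk_shortcut u s v : walk u s v -> exists s', [/\ walk u s' v,
  simple_walk u s', {subset s' <= s} &
  forall l : E -> R, (forall x r, walk x r x -> 0 <= \sum_(e <- r) l e) ->
    \sum_(e <- s') l e <= \sum_(e <- s) l e].
Proof.
elim: s u => [|e s IH] u /=; first by move=> ->; exists [::].
move=> [tl_e /IH [s0 [ws0 ss0 sub0 le0]]].
case us0: (u \in hd e :: map hd s0).
  have [p [q [pre [s0E wp wq nodes]]]] := walk_split_at ws0 us0.
  exists q; split=> //.
  - by move: ss0; rewrite /simple_walk nodes cat_uniq => /and3P [].
  - by move=> a aq; rewrite inE sub0 ?orbT // s0E mem_cat aq orbT.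
  move=> l cycle_ge0; rewrite big_cons; apply: le_trans (lerD (lexx _) (le0 l cycle_ge0)).
  rewrite s0E big_cat addrA lerDr.
  by have := cycle_ge0 u (e :: p); rewrite big_cons; apply.
exists (e :: s0); split=> //.
- by rewrite /simple_walk /= us0.
- by move=> a; rewrite !inE => /orP [->|/sub0 ->]; rewrite ?orbT.
- by move=> l cycle_ge0; rewrite !big_cons lerD2l; apply: le0.
Qed.

Variables (l : E -> R) (pi : V -> R).
Hypothesis pi_feasible : forall e, pi (tl e) - pi (hd e) <= l e.

Lemma closed_walk_ge0 x r : walk x r x -> 0 <= \sum_(e <- r) l e.
Proof. by move=> wr; have := potential_le_walk pi_feasible wr; rewrite subrr. Qed.

Lemma shorter_simple_walk u s v : walk u s v ->
  exists2 s', s' \in simple_walks u v & \sum_(e <- s') l e <= \sum_(e <- s) l e.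
Proof.
move=> /walk_shortcut [s' [ws' ss' _ le_s']]; exists s'; first exact/mem_simple_walks.
exact: le_s' closed_walk_ge0.
Qed.

(* Shortest-path duality: [y v] is the length of a shortest simple walk from
   [v] to [d], capped by [pi v + K] so that [y] stays a feasible potential at
   nodes that cannot reach [d]. *)
Lemma shortest_walk_potential o d s0 : walk o s0 d -> exists (y : V -> R) W,
  [/\ forall e, y (tl e) - y (hd e) <= l e, walk o W d, simple_walk o W &
      y o - y d = \sum_(e <- W) l e].
Proof.
move=> ws0; pose len s := \sum_(e <- s) l e.
have [s1 s1_in _] := shorter_simple_walk ws0.
have [W W_in Wmin] : exists2 W, W \in simple_walks o d &
    forall s, s \in simple_walks o d -> len W <= len s.
  by apply: seq_argmin; apply/eqP => Lo; rewrite Lo in s1_in.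
pose K := `|pi d| + `|len W - pi o|.
pose y v := \big[Num.min/pi v + K]_(s <- simple_walks v d) len s.
have y_le v s : s \in simple_walks v d -> y v <= len s by move=> s_in; rewrite ge_bigmin_seq.
have y_le_cap v : y v <= pi v + K by apply: bigmin_le_id.
have le_y v x : x <= pi v + K -> (forall s, s \in simple_walks v d -> x <= len s) -> x <= y v.
  by move=> x_le x_len; rewrite /y big_seq; apply: le_bigmin.
have [wW sW] := (mem_simple_walks o d W).1 W_in.
exists y, W; split=> //.
  move=> e; suff : y (tl e) - l e <= y (hd e) by lra.
  apply: le_y => [|s /mem_simple_walks [ws _]].
    by have := y_le_cap (tl e); have := pi_feasible e; lra.
  have [s' s'_in le_s'] := @shorter_simple_walk (tl e) (e :: s) d (conj erefl ws).
  by have := y_le _ _ s'_in; move: le_s'; rewrite /len big_cons; lra.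
have yd0 : y d = 0.
  apply/le_anti/andP; split.
    by have := y_le d [::]; rewrite /len big_nil; apply; apply/mem_simple_walks.
  apply: le_y => [|s /mem_simple_walks [ws _]]; last exact: closed_walk_ge0 ws.
  by rewrite -lerBlDl sub0r (le_trans (ler_norm _)) // normrN lerDl.
rewrite yd0 subr0; apply/le_anti/andP; split; first exact: y_le.
apply: le_y => [|s /Wmin //].
by rewrite -lerBlDl (le_trans (ler_norm _)) // lerDr.
Qed.

End Lengths.
End Walks.

Section Network.
Variables (R : realType) (V A : finType) (tail head : A -> V) (c : A -> R).
Variables (A1 : {set A}) (o d : V).
Local Notation walk := (@walk V A tail head).
Local Notation tarc := (tarc A1).

Definition cost (s : seq A) := \sum_(a <- s) c a.
Definition toll (t : tarc -> R) (s : seq A) := \sum_(a <- s) ext t a.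

Definition dual_feasible (t : tarc -> R) (y : V -> R) :=
  (forall i, 0 <= t i) /\ forall a, y (tail a) - y (head a) <= c a + ext t a.

Definition arc_count (s : seq A) : tarc -> R := fun i => (count_mem (val i) s)%:R.
Definition walk_flow (s : seq A) : A -> R := fun a => (count_mem a s)%:R.

Lemma ext_notin (t : tarc -> R) a : a \notin A1 -> ext t a = 0.
Proof. by move=> a_notin; rewrite /ext insubF //; apply/negbTE. Qed.

Lemma ext_val (t : tarc -> R) (i : tarc) : ext t (val i) = t i.
Proof. by rewrite /ext valK. Qed.

Lemma ext_in (t : tarc -> R) a : a \in A1 -> exists i : tarc, val i = a /\ ext t a = t i.
Proof.
move=> a_in; exists (Sub a a_in); rewrite SubK; split=> //.
by rewrite -[in LHS](SubK tarc a_in) ext_val.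
Qed.

Lemma ext_ge0 (t : tarc -> R) a : (forall i, 0 <= t i) -> 0 <= ext t a.
Proof. by move=> t_ge0; rewrite /ext; case: insubP => [i _ _|_] /=. Qed.

Lemma extZ (t : tarc -> R) k a : ext (fun i => k * t i) a = k * ext t a.
Proof. by rewrite /ext; case: insubP => [i _ _|_] /=; rewrite ?mulr0. Qed.

Lemma ext_le_sum (t : tarc -> R) a : (forall i, 0 <= t i) -> ext t a <= \sum_i t i.
Proof.
move=> t_ge0; rewrite /ext; case: insubP => [i _ _|_] /=; last by rewrite sumr_ge0.
by rewrite (bigD1 i) //= lerDl sumr_ge0.
Qed.

Lemma sum_ext (G : A -> R) (t : tarc -> R) :
  \sum_a G a * ext t a = \sum_(i : tarc) G (val i) * t i.
Proof.
rewrite (bigID (mem A1)) /= [X in _ + X]big1 ?addr0; last first.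
  by move=> a a_notin; rewrite ext_notin ?mulr0.
by rewrite big_sub; apply: eq_bigr => i _; rewrite ext_val.
Qed.

Lemma sum_count_mem (F : A -> R) s : \sum_a (count_mem a s)%:R * F a = \sum_(a <- s) F a.
Proof.
elim: s => [|b s IH]; first by rewrite big_nil big1 // => a _; rewrite mul0r.
under eq_bigr do rewrite /= natrD mulrDl.
rewrite big_split /= IH big_cons; congr (_ + _).
rewrite (bigD1 b) //= eqxx mul1r big1 ?addr0 // => a ab.
by rewrite eq_sym (negbTE ab) mul0r.
Qed.

Lemma dotTC (u v : tarc -> R) : dotT u v = dotT v u.
Proof. by apply: eq_bigr => i _; rewrite mulrC. Qed.

Lemma toll_dotT t s : toll t s = dotT (arc_count s) t.
Proof. by rewrite /toll -sum_count_mem sum_ext. Qed.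

Lemma sum_inc (y : V -> R) a : \sum_v inc tail head v a * y v = y (tail a) - y (head a).
Proof.
rewrite /inc; under eq_bigr do rewrite mulrBl [tail a == _]eq_sym [head a == _]eq_sym.
by rewrite sumrB !sum_delta.
Qed.

Lemma sum_bvec (y : V -> R) : \sum_v bvec o d v * y v = y o - y d.
Proof.
by rewrite /bvec; under eq_bigr do rewrite mulrBl; rewrite sumrB !sum_delta.
Qed.

Lemma lp_feasE t y : lp_feas tail head c t y <-> dual_feasible t y.
Proof.
rewrite /lp_feas /dual_feasible; split=> -[t_ge0 yc]; split=> // a.
  by rewrite -lerBlDr -sum_inc.
by rewrite sum_inc lerBlDr.
Qed.

Lemma walk_flowX s : walk o s d -> flowX tail head o d (walk_flow s).
Proof.
move=> ws; split=> [v|a]; last by rewrite /walk_flow ler0n.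
have /= tele := walk_telescope (fun u => (u == v)%:R : R) ws.
under eq_bigr do rewrite mulrC; rewrite sum_count_mem /bvec [v == o]eq_sym [v == d]eq_sym -tele.
exact: eq_bigr.
Qed.

Lemma cost_walk_flow s : \sum_a c a * walk_flow s a = cost s.
Proof. by under eq_bigr do rewrite mulrC; rewrite sum_count_mem. Qed.

Lemma weak_duality_flow t y x : flowX tail head o d x -> dual_feasible t y ->
  y o - y d <= \sum_a c a * x a + dotT t (restr x).
Proof.
move=> [Nx x_ge0] [t_ge0 yc]; rewrite -sum_bvec.
under eq_bigr do rewrite -Nx mulr_suml.
rewrite exchange_big /=.
have -> : dotT t (restr x) = \sum_a x a * ext t a by rewrite sum_ext dotTC.
rewrite -big_split /=; apply: ler_sum => a _.
have -> : \sum_v inc tail head v a * x a * y v = x a * (y (tail a) - y (head a)).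
  by rewrite -sum_inc mulr_sumr; apply: eq_bigr => v _; rewrite mulrAC mulrC.
by rewrite mulrC [x a * _]mulrC -mulrDl ler_wpM2r.
Qed.

Lemma weak_duality_walk t y W : dual_feasible t y -> walk o W d ->
  y o - y d <= cost W + toll t W.
Proof. by move=> [_ yc] wW; rewrite /cost /toll -big_split; apply: potential_le_walk wW. Qed.

Lemma toll_ge0 (t : tarc -> R) s : (forall i, 0 <= t i) -> 0 <= toll t s.
Proof. by move=> t_ge0; rewrite sumr_ge0 // => a _; rewrite ext_ge0. Qed.

Lemma toll_le_size (t : tarc -> R) s : (forall i, 0 <= t i) ->
  toll t s <= (size s)%:R * \sum_i t i.
Proof.
move=> t_ge0; elim: s => [|a s IH]; first by rewrite /toll big_nil mul0r.
rewrite /toll big_cons /= -addn1 natrD mulrDl mul1r addrC lerD //.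
exact: ext_le_sum.
Qed.

Hypothesis c_ge0 : forall a, 0 <= c a.
Hypothesis toll_free : toll_free_path tail head A1 o d.
Local Notation simple := (simple_walk head o).

Definition active (Q : seq A) (t : tarc -> R) :=
  walk o Q d /\ forall W, walk o W d -> cost Q + toll t Q <= cost W + toll t W.

Lemma cost_ge0 s : 0 <= cost s.
Proof. exact: sumr_ge0. Qed.

Lemma shortest_walk (t : tarc -> R) : (forall i, 0 <= t i) ->
  exists y W, [/\ dual_feasible t y, walk o W d, simple W & y o - y d = cost W + toll t W].
Proof.
move=> t_ge0; have [s0 [ws0 _]] := toll_free.
have zero_feasible a : 0 - 0 <= c a + ext t a by rewrite subrr addr_ge0 ?ext_ge0.
have [y [W [yl wW sW yW]]] :=
  shortest_walk_potential (l := fun a => c a + ext t a) (pi := fun=> 0) zero_feasible ws0.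
by exists y, W; split=> //; rewrite yW big_split.
Qed.

Lemma exists_simple_active (t : tarc -> R) : (forall i, 0 <= t i) ->
  exists2 W, active W t & simple W.
Proof.
move=> t_ge0; have [y [W [yt wW sW yW]]] := shortest_walk t_ge0.
by exists W => //; split=> // W' wW'; rewrite -yW weak_duality_walk.
Qed.

Lemma active_potential Q (t : tarc -> R) : (forall i, 0 <= t i) -> active Q t ->
  exists y, [/\ dual_feasible t y, y o - y d = cost Q + toll t Q &
    forall a, a \in Q -> y (tail a) - y (head a) = c a + ext t a].
Proof.
move=> t_ge0 [wQ Qmin]; have [y [W [yt wW _ yW]]] := shortest_walk t_ge0.
have yQ : y o - y d = cost Q + toll t Q.
  by apply/le_anti; rewrite weak_duality_walk // yW Qmin.
exists y; split=> // a aQ; apply/le_anti; rewrite yt.2 /=.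
pose slack b := c b + ext t b - (y (tail b) - y (head b)).
have slack_ge0 b : 0 <= slack b by rewrite subr_ge0 yt.2.
have := sum_seq_ge_mem slack_ge0 aQ.
by rewrite sumrB big_split /= (walk_telescope y wQ) -yQ subrr subr_le0.
Qed.

Lemma Tset_arc_count P (t : tarc -> R) : (forall i, 0 <= t i) -> active P t ->
  Tset tail head c o d (arc_count P) t.
Proof.
move=> t_ge0 Pt; have [y [yt yP _]] := active_potential t_ge0 Pt.
exists y; split; first exact/lp_feasE.
move=> t' y' /lp_feasE y't'; rewrite /lp_obj !sum_bvec yP.
by have := weak_duality_walk y't' Pt.1; rewrite !toll_dotT; lra.
Qed.

Lemma Tset_perturbed_walk (w t : tarc -> R) y eta :
  dual_feasible t y ->
  (forall t' y', lp_feas tail head c t' y' -> lp_obj o d w t' y' <= lp_obj o d w t y) ->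
  0 <= eta -> eta < 1 -> exists W, [/\ walk o W d, simple W &
    cost W + toll t W - (y o - y d) <= eta * (toll t W - dotT w t)].
Proof.
move=> [t_ge0 _] y_opt eta_ge0 eta_lt1.
pose teta i := (1 - eta) * t i.
have teta_ge0 i : 0 <= teta i by rewrite mulr_ge0 // subr_ge0 ltW.
have [ye [W [yet wW sW yeW]]] := shortest_walk teta_ge0.
exists W; split=> //.
have := y_opt teta ye; rewrite lp_feasE => /(_ yet).
rewrite /lp_obj !sum_bvec yeW.
have -> : dotT w teta = (1 - eta) * dotT w t.
  by rewrite /dotT mulr_sumr; apply: eq_bigr => i _; rewrite mulrCA.
have -> : toll teta W = (1 - eta) * toll t W.
  by rewrite /toll mulr_sumr; apply: eq_bigr => a _; rewrite extZ.
lra.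
Qed.

(* Perturb [t] to [(1 - eta) t], with [eta] below the smallest positive
   optimality gap of a simple walk. *)
Lemma Tset_active_walk (w t : tarc -> R) : (forall i, 0 <= w i) ->
  Tset tail head c o d w t ->
  exists Q, [/\ active Q t, simple Q & dotT w t <= toll t Q].
Proof.
move=> w_ge0 [y [/lp_feasE yt y_opt]]; have t_ge0 := yt.1.
pose gap s := cost s + toll t s - (y o - y d).
have gap_ge0 W : walk o W d -> 0 <= gap W by move=> wW; rewrite subr_ge0 weak_duality_walk.
have [g g_gt0 gP] := seq_pos_lower_bound (simple_walks tail head o d) gap.
pose B := #|V|%:R * \sum_i t i + 1.
have B_gt0 : 0 < B by rewrite ltr_wpDl // mulr_ge0 // sumr_ge0.
have gB_gt0 : 0 < g + B by rewrite addr_gt0.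
pose eta := g / (g + B).
have eta_gt0 : 0 < eta by rewrite divr_gt0.
have eta_lt1 : eta < 1 by rewrite ltr_pdivrMr // mul1r ltrDl.
have etaB_lt_g : eta * B < g by rewrite mulrAC ltr_pdivrMr //; nra.
have [W [wW sW gapW]] := Tset_perturbed_walk yt y_opt (ltW eta_gt0) eta_lt1.
have tollW_le : toll t W <= B.
  apply: le_trans (toll_le_size W t_ge0) _; rewrite ler_wpDr // ler_wpM2r ?sumr_ge0 //.
  by rewrite ler_nat ltnW // (simple_walk_size sW).
have wt_ge0 : 0 <= dotT w t by rewrite sumr_ge0 // => i _; rewrite mulr_ge0.
have eta_bound : eta * (toll t W - dotT w t) <= eta * B by rewrite ler_pM2l //; lra.
have W_in : W \in simple_walks tail head o d by apply/mem_simple_walks.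
have gapW0 : gap W = 0.
  apply/le_anti; rewrite gap_ge0 // andbT leNgt; apply/negP => gapW_gt0.
  by have := gP W W_in gapW_gt0; rewrite /gap; lra.
exists W; split=> //.
  split=> // W' wW'; have := weak_duality_walk yt wW'.
  by move: gapW0; rewrite /gap; lra.
by move: gapW; rewrite -/(gap W) gapW0 pmulr_rge0 // subr_ge0.
Qed.

Section FixedWalk.
Variable Q : seq A.

(* Keep the toll-free arcs with length [c] and reverse the arcs of [Q] with
   length [- c]: the potentials of this graph are the node prices that some
   toll makes dual feasible with [Q] tight, so its o-d distance is the largest
   [cost Q + toll t Q] over the tolls [t] making [Q] shortest. *)
Definition aux_arc_mem (x : A + A) : bool :=
  match x with inl a => a \notin A1 | inr a => a \in Q end.
Definition aux_arc := {x : A + A | aux_arc_mem x}.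
Definition aux_tail (e : aux_arc) : V := match val e with inl a => tail a | inr a => head a end.
Definition aux_head (e : aux_arc) : V := match val e with inl a => head a | inr a => tail a end.
Definition aux_len (e : aux_arc) : R := match val e with inl a => c a | inr a => - c a end.

Lemma aux_potential (t : tarc -> R) y : dual_feasible t y ->
  (forall a, a \in Q -> c a <= y (tail a) - y (head a)) ->
  forall e, y (aux_tail e) - y (aux_head e) <= aux_len e.
Proof.
move=> [_ yc] yQ [[a|a] a_in]; rewrite /aux_tail /aux_head /aux_len /=.
  by have := yc a; rewrite ext_notin ?addr0.
by rewrite -opprB lerN2 yQ.
Qed.

Lemma aux_walk u s v : walk u s v -> all (fun a => a \notin A1) s ->
  exists s', Defs.walk aux_tail aux_head u s' v.
Proof.
elim: s u => [|a s IH] u /=; first by move=> ->; exists [::].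
move=> [tl_a ws] /andP [a_notin /(IH _ ws) [s' ws']].
by exists (exist _ (inl a) a_notin :: s').
Qed.

Lemma aux_potential_toll (y : V -> R) : (forall e, y (aux_tail e) - y (aux_head e) <= aux_len e) ->
  exists2 t : tarc -> R, dual_feasible t y &
    forall a, a \in Q -> y (tail a) - y (head a) = c a + ext t a.
Proof.
move=> y_aux; pose t (i : tarc) := Num.max 0 (y (tail (val i)) - y (head (val i)) - c (val i)).
have free_le a : a \notin A1 -> y (tail a) - y (head a) <= c a.
  by move=> a_notin; exact: (y_aux (exist _ (inl a) a_notin)).
have Q_ge a : a \in Q -> c a <= y (tail a) - y (head a).
  by move=> aQ; have := y_aux (exist _ (inr a) aQ); rewrite /aux_len /= -opprB lerN2.
exists t.
  split=> [i|a]; first by rewrite le_max lexx.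
  have [a_in|a_notin] := boolP (a \in A1); last by rewrite ext_notin // addr0; apply: free_le.
  have [i [<- ->]] := ext_in t a_in.
  by rewrite -lerBlDl le_max lexx orbT.
move=> a aQ; have [a_in|a_notin] := boolP (a \in A1); last first.
  by rewrite ext_notin // addr0; apply/le_anti; rewrite free_le // Q_ge.
have [i [ia ->]] := ext_in t a_in.
rewrite /t ia max_r; first by rewrite [RHS]addrC subrK.
by rewrite subr_ge0 Q_ge.
Qed.

Lemma max_toll_active (t0 : tarc -> R) : (forall i, 0 <= t0 i) -> active Q t0 ->
  exists tQ : tarc -> R, [/\ forall i, 0 <= tQ i, active Q tQ &
    forall t : tarc -> R, (forall i, 0 <= t i) -> active Q t -> toll t Q <= toll tQ Q].
Proof.
move=> t0_ge0 Qt0; have [wQ _] := Qt0.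
have active_aux t : (forall i, 0 <= t i) -> active Q t -> exists2 y,
    y o - y d = cost Q + toll t Q & forall e, y (aux_tail e) - y (aux_head e) <= aux_len e.
  move=> t_ge0 Qt; have [y [yt yQ ytight]] := active_potential t_ge0 Qt.
  exists y => //; apply: aux_potential yt _ => a aQ.
  by rewrite ytight // lerDl ext_ge0.
have [y0 _ y0_aux] := active_aux t0 t0_ge0 Qt0.
have [s0 [ws0 free_s0]] := toll_free.
have [s0' ws0'] := aux_walk ws0 free_s0.
have [y [W [y_aux wW _ yW]]] := shortest_walk_potential y0_aux ws0'.
have [tQ [tQ_ge0 ytQ] ytight] := aux_potential_toll y_aux.
have tollQ : cost Q + toll tQ Q = y o - y d.
  by rewrite -(walk_telescope y wQ) -big_split; apply: eq_big_seq => a aQ; rewrite ytight.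
exists tQ; split=> //.
  by split=> // W' wW'; rewrite tollQ weak_duality_walk.
move=> t t_ge0 Qt; have [y' y'Q y'_aux] := active_aux t t_ge0 Qt.
by have := potential_le_walk y'_aux wW; rewrite -yW y'Q -tollQ lerD2l.
Qed.

End FixedWalk.

Lemma shortcut_active Q (t : tarc -> R) : (forall i, 0 <= t i) -> active Q t ->
  exists Q', [/\ active Q' t, simple Q' & toll t Q <= toll t Q'].
Proof.
move=> t_ge0 [wQ Qmin]; have [Q' [wQ' sQ' _ Q'_le]] := walk_shortcut R wQ.
have nonneg (l : A -> R) : (forall a, 0 <= l a) -> \sum_(a <- Q') l a <= \sum_(a <- Q) l a.
  by move=> l_ge0; apply: Q'_le => x r _; rewrite sumr_ge0.
have cost_le : cost Q' <= cost Q by apply: nonneg.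
have total_le : cost Q' + toll t Q' <= cost Q + toll t Q.
  by rewrite -!big_split; apply: nonneg => a; rewrite addr_ge0 ?ext_ge0.
have := Qmin Q' wQ'; exists Q'; split=> //; last by lra.
by split=> // W wW; apply: le_trans total_le (Qmin W wW).
Qed.

Lemma max_revenue_pair : exists P (t : tarc -> R), [/\ forall i, 0 <= t i, active P t,
  simple P & forall Q t', (forall i, 0 <= t' i) -> active Q t' -> toll t' Q <= toll t P].
Proof.
pose ok Q (t : tarc -> R) := (forall i, 0 <= t i) /\ active Q t.
have t0_ge0 : forall i : tarc, 0 <= (fun=> 0 : R) i by [].
have [W0 W0t0 sW0] := exists_simple_active t0_ge0.
have W0_in : W0 \in simple_walks tail head o d by apply/mem_simple_walks; case: W0t0.
have attained Q t : ok Q t -> exists2 v, ok Q v & forall t', ok Q t' -> toll t' Q <= toll v Q.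
  case=> t_ge0 Qt; have [tQ [tQ_ge0 QtQ tQmax]] := max_toll_active t_ge0 Qt.
  by exists tQ => [|t' []]; [split | apply: tQmax].
have [P [t [P_in [t_ge0 Pt] Pmax]]] := seq_argmax_attained attained W0_in (conj t0_ge0 W0t0).
have [_ sP] := (mem_simple_walks _ _ _ _ _).1 P_in.
exists P, t; split=> // Q t' t'_ge0 Qt'.
have [Q' [Q't' sQ' le_Q']] := shortcut_active t'_ge0 Qt'.
apply: le_trans le_Q' (Pmax _ _ _ (conj t'_ge0 Q't')).
by apply/mem_simple_walks; case: Q't'.
Qed.

Definition tolled_count (s : seq A) := count (fun a => a \in A1) s.

Lemma max_revenue_pair_fewest_tolls : exists P (t : tarc -> R),
  [/\ forall i, 0 <= t i, active P t, simple P,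
      forall Q t', (forall i, 0 <= t' i) -> active Q t' -> toll t' Q <= toll t P &
      forall Q, simple Q -> active Q t -> toll t P <= toll t Q ->
        (tolled_count P <= tolled_count Q)%N].
Proof.
have [P0 [t0 [t0_ge0 P0t0 sP0 P0max]]] := max_revenue_pair.
pose good n := `[< exists Q (t : tarc -> R), [/\ forall i, 0 <= t i, active Q t, simple Q,
  toll t0 P0 <= toll t Q & tolled_count Q = n] >].
have good_P0 : exists n, good n by exists (tolled_count P0); apply/asboolP; exists P0, t0.
case: (ex_minnP good_P0) => n /asboolP [P [t [t_ge0 Pt sP P_opt <-]]] Pmin.
exists P, t; split=> // [Q t' t'_ge0 Qt'|Q sQ Qt le_PQ].
  exact: le_trans (P0max _ _ t'_ge0 Qt') P_opt.
by apply: Pmin; apply/asboolP; exists Q, t; split=> //; apply: le_trans le_PQ.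
Qed.

Local Notation g := (g_val tail head c o d).

Lemma g_ge_dual (p t : tarc -> R) y : dual_feasible t y ->
  ((y o - y d - dotT t p)%:E <= g p)%E.
Proof.
move=> yt; have f_ge : ((y o - y d)%:E <= f_val tail head c o d t)%E.
  rewrite /f_val asboolT; last exact: yt.1.
  by apply: le_ereal_inf_tmp => _ [x xX <-]; rewrite lee_fin weak_duality_flow.
apply: le_trans (ereal_sup_ubound (ex_intro2 _ _ t I erefl)).
by rewrite EFinB leeB.
Qed.

Lemma g_arc_count_le P : walk o P d -> (g (arc_count P) <= (cost P)%:E)%E.
Proof.
move=> wP; apply: ge_ereal_sup => _ [t _ <-]; rewrite /f_val.
case: ifP => _; last by rewrite leNye.
have flowP : (ereal_inf [set ((\sum_a c a * x a) + dotT t (restr x))%:E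
                          | x in flowX tail head o d] <= (cost P + dotT t (arc_count P))%:E)%E.
  apply: ereal_inf_lbound; exists (walk_flow P); first exact: walk_flowX.
  by rewrite cost_walk_flow.
by have := leeB flowP (lexx (dotT t (arc_count P))%:E); rewrite -EFinB addrK.
Qed.

Lemma epi_g_ge0 (p : tarc -> R) r : (g p <= r%:E)%E -> forall i, 0 <= p i.
Proof.
move=> gp i; rewrite leNgt; apply/negP => pi_lt0.
pose K := (`|r| + 1) / - p i.
pose t (j : tarc) : R := if j == i then K else 0.
have t_ge0 j : 0 <= t j by rewrite /t; case: ifP; rewrite // divr_ge0 ?oppr_ge0 ?ltW.
have zero_feasible : dual_feasible t (fun=> 0) by split=> // a; rewrite subrr addr_ge0 ?ext_ge0.
have := le_trans (g_ge_dual p zero_feasible) gp; rewrite lee_fin subrr sub0r.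
have -> : dotT t p = K * p i.
  by rewrite /dotT (bigD1 i) //= big1 ?addr0 /t ?eqxx // => j /negbTE ->; rewrite mul0r.
rewrite -mulrN /K -mulrA mulVf ?mulr1 ?oppr_eq0 ?lt_eqF //.
by have := ler_norm r; lra.
Qed.

(* Both points satisfy the dual bound [g >= cost P + t^T (w - _)], with
   equality at their convex combination, hence each with equality. *)
Lemma epi_g_supporting P (t : tarc -> R) (p q : pt A1) l :
  (forall i, 0 <= t i) -> active P t ->
  epi_g tail head c o d p -> epi_g tail head c o d q -> 0 < l < 1 ->
  comb l p q = (arc_count P, cost P) ->
  p.2 = cost P + dotT t (arc_count P) - dotT t p.1.
Proof.
case: p q => [p1 rp] [q1 rq] t_ge0 Pt; rewrite /epi_g /= => gp gq l01 [w_comb r_comb].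
have [y [yt yP _]] := active_potential t_ge0 Pt.
rewrite toll_dotT dotTC in yP.
have := le_trans (g_ge_dual p1 yt) gp; have := le_trans (g_ge_dual q1 yt) gq.
rewrite !lee_fin yP => le_q le_p.
have dot_comb : dotT t (arc_count P) = l * dotT t p1 + (1 - l) * dotT t q1.
  rewrite /dotT !mulr_sumr -big_split; apply: eq_bigr => i _.
  by rewrite -(congr1 (fun f => f i) w_comb) /=; ring.
suff : rp - (cost P + dotT t (arc_count P) - dotT t p1) = 0 by lra.
apply: (convex_comb_eq0 (b := rq - (cost P + dotT t (arc_count P) - dotT t q1)) l01).
- by rewrite subr_ge0.
- by rewrite subr_ge0.
by rewrite -r_comb dot_comb; ring.
Qed.

Section Candidate.
Variables (P : seq A) (ts : tarc -> R).
Hypotheses (ts_ge0 : forall i, 0 <= ts i) (Pts : active P ts) (sP : simple P).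
Hypothesis P_fewest_tolls : forall Q, simple Q -> active Q ts -> toll ts P <= toll ts Q ->
  (tolled_count P <= tolled_count Q)%N.
Local Notation w := (arc_count P).
Local Notation cP := (cost P).

Lemma toll_le_within (t : tarc -> R) W : (forall i, 0 <= t i) -> uniq W ->
  (forall a, a \in W -> a \in A1 -> a \in P) -> toll t W <= toll t P.
Proof.
move=> t_ge0 uW WP; rewrite /toll !big_uniq ?(simple_walk_uniq sP) //=.
rewrite [X in _ <= X]big_mkcond [X in X <= _]big_mkcond /=; apply: ler_sum => a _.
case: ifP => aW; last by case: ifP; rewrite ?ext_ge0.
have [a_in|a_notin] := boolP (a \in A1); first by rewrite WP.
by rewrite ext_notin //; case: ifP.
Qed.

Lemma tolled_count_lt W x : uniq W -> (forall a, a \in W -> a \in A1 -> a \in P) ->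
  x \in P -> x \in A1 -> x \notin W -> (tolled_count W < tolled_count P)%N.
Proof.
move=> uW WP xP x_in xW; rewrite /tolled_count -!size_filter.
have /card_uniqP <- := filter_uniq (fun a => a \in A1) uW.
have /card_uniqP <- := filter_uniq (fun a => a \in A1) (simple_walk_uniq sP).
apply/proper_card/properP; split.
  by apply/fintype.subsetP => a; rewrite !mem_filter => /andP [a_in aW]; rewrite a_in WP.
by exists x; rewrite !mem_filter x_in ?xP ?(negbTE xW).
Qed.

Lemma cost_le_within W : walk o W d -> simple W ->
  (forall a, a \in W -> a \in A1 -> a \in P) -> cP <= cost W.
Proof.
move=> wW sW WP; have := Pts.2 W wW.
by have := toll_le_within ts_ge0 (simple_walk_uniq sW) WP; lra.
Qed.

(* Minimality of the number of tolled arcs of [P] is what makes dropping a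
   tolled arc of [P] strictly more expensive. *)
Lemma cost_lt_missing W x : walk o W d -> simple W ->
  (forall a, a \in W -> a \in A1 -> a \in P) ->
  x \in P -> x \in A1 -> x \notin W -> cP < cost W.
Proof.
move=> wW sW WP xP x_in xW; rewrite ltNge; apply/negP => costW_le.
have tollW_le := toll_le_within ts_ge0 (simple_walk_uniq sW) WP.
have PW := Pts.2 W wW.
have Wts : active W ts by split=> // W' wW'; have := Pts.2 W' wW'; lra.
have := P_fewest_tolls sW Wts (ltac:(lra)).
by rewrite leqNgt (tolled_count_lt (simple_walk_uniq sW) WP xP x_in xW).
Qed.

Lemma cost_gap : exists2 eps : R, 0 < eps <= 1 &
  forall W, walk o W d -> simple W -> cP < cost W -> cP + eps <= cost W.
Proof.
have [g g_gt0 gP] := seq_pos_lower_bound (simple_walks tail head o d) (fun s => cost s - cP).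
have g1_gt0 : 0 < 1 + g by rewrite addr_gt0.
have g_le : g / (1 + g) <= g by rewrite ler_pdivrMr // mulrDr mulr1 lerDl mulr_ge0 // ltW.
exists (g / (1 + g)).
  by rewrite divr_gt0 //= ler_pdivrMr // mul1r lerDr ltW.
move=> W wW sW cP_lt; have W_in : W \in simple_walks tail head o d by apply/mem_simple_walks.
by have := gP W W_in (ltac:(by rewrite subr_gt0)); lra.
Qed.

Section Probes.
Variable eps : R.
Hypotheses (eps_gt0 : 0 < eps) (eps_le1 : eps <= 1)
  (eps_gap : forall W, walk o W d -> simple W -> cP < cost W -> cP + eps <= cost W).

(* Test tolls for the extremality of [(w, cP)]: they price the tolled arcs off
   [P] out and keep [P] shortest, and [Some j] isolates the coordinate [j]. *)
Definition probe_toll (oj : option tarc) : tarc -> R :=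
  fun i => if val i \in P then (if oj == Some i then eps else 0) else cP + 1.

Definition probe_bound (oj : option tarc) : R := if oj is Some _ then eps else 0.

Definition on_P (oj : option tarc) : bool := if oj is Some j then val j \in P else true.

Lemma probe_toll_ge0 oj i : 0 <= probe_toll oj i.
Proof.
rewrite /probe_toll; case: ifP => _; last by rewrite addr_ge0 ?cost_ge0.
by case: ifP => // _; apply: ltW.
Qed.

Lemma ext_probe_toll oj a : a \in P ->
  ext (probe_toll oj) a = if oj is Some j then (if a == val j then eps else 0) else 0.
Proof.
move=> aP; have [a_in|a_notin] := boolP (a \in A1); last first.
  by rewrite ext_notin //; case: oj => [j|] //; case: eqP => // aj; rewrite aj (valP j) in a_notin.
have [i [ia ->]] := ext_in (probe_toll oj) a_in.
by rewrite /probe_toll ia aP; case: oj => [j|] //=; rewrite -ia val_eqE eq_sym.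
Qed.

Lemma toll_probe_le oj : toll (probe_toll oj) P <= probe_bound oj.
Proof.
rewrite /toll (eq_big_seq _ (fun a aP => ext_probe_toll oj aP)).
case: oj => [j|]; last by rewrite big1.
rewrite sum_seq_pred1; have [jP|jP] := boolP (val j \in P).
  by rewrite count_uniq_mem ?(simple_walk_uniq sP) // jP mul1r.
by rewrite (count_memPn jP) mul0r ltW.
Qed.

Lemma probe_walk_leaving oj W x : walk o W d -> x \in W -> x \in A1 -> x \notin P ->
  cP + probe_bound oj <= cost W + toll (probe_toll oj) W.
Proof.
move=> wW xW x_in xP; have [i [ix ext_x]] := ext_in (probe_toll oj) x_in.
have bound_le1 : probe_bound oj <= 1 by case: (oj) => [j|]; rewrite /= ?ler01.
have : ext (probe_toll oj) x <= toll (probe_toll oj) W.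
  by apply: sum_seq_ge_mem xW => a; rewrite ext_ge0 // => j; apply: probe_toll_ge0.
rewrite ext_x {1}/probe_toll ix (negbTE xP) => le_toll.
by have := cost_ge0 W; lra.
Qed.

Lemma probe_walk_within oj W : on_P oj -> walk o W d -> simple W ->
  (forall a, a \in W -> a \in A1 -> a \in P) ->
  cP + probe_bound oj <= cost W + toll (probe_toll oj) W.
Proof.
move=> ojP wW sW WP; have costW := cost_le_within wW sW WP.
case: oj ojP => [j /= jP|_]; rewrite /probe_bound; last first.
  by have := toll_ge0 W (probe_toll_ge0 None); lra.
have := toll_ge0 W (probe_toll_ge0 (Some j)).
have [jW|jW] := boolP (val j \in W).
  have : ext (probe_toll (Some j)) (val j) <= toll (probe_toll (Some j)) W.
    by apply: sum_seq_ge_mem jW => a; rewrite ext_ge0 // => i; apply: probe_toll_ge0.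
  by rewrite ext_val /probe_toll jP eqxx; lra.
by have := eps_gap wW sW (cost_lt_missing wW sW WP jP (valP j) jW); lra.
Qed.

Lemma probe_active oj : on_P oj -> active P (probe_toll oj).
Proof.
move=> ojP; split=> [|W wW]; first exact: Pts.1.
apply: le_trans (_ : cP + probe_bound oj <= _); first by rewrite lerD2l toll_probe_le.
have [/hasP [x xW /andP [x_in xP]]|/hasPn WP] :=
  boolP (has (fun a => (a \in A1) && (a \notin P)) W).
  exact: probe_walk_leaving wW xW x_in xP.
have [W' [wW' sW' W'W W'_le]] := walk_shortcut R wW.
have W'P a : a \in W' -> a \in A1 -> a \in P.
  by move=> aW' a_in; have := WP a (W'W a aW'); rewrite a_in negbK.
apply: le_trans (probe_walk_within ojP wW' sW' W'P) _.
rewrite /cost /toll -!big_split; apply: W'_le => x r _; apply: sumr_ge0 => a _.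
by rewrite addr_ge0 ?ext_ge0 // => i; apply: probe_toll_ge0.
Qed.

Lemma dotT_probe_None (v : tarc -> R) : (forall i, val i \notin P -> v i = 0) ->
  dotT (probe_toll None) v = 0.
Proof.
move=> v_off; rewrite /dotT big1 // => i _; rewrite /probe_toll.
by case: ifPn => iP; rewrite ?mul0r // v_off ?mulr0.
Qed.

Lemma dotT_probe_Some (v : tarc -> R) j : (forall i, val i \notin P -> v i = 0) ->
  val j \in P -> dotT (probe_toll (Some j)) v = eps * v j.
Proof.
move=> v_off jP; rewrite /dotT (bigD1 j) //= big1 ?addr0 /probe_toll ?jP ?eqxx // => i ij.
case: ifPn => iP; last by rewrite v_off ?mulr0.
by case: eqP => [[ji]|_]; [rewrite ji eqxx in ij | rewrite mul0r].
Qed.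

Lemma epi_g_extreme (p q : pt A1) l :
  epi_g tail head c o d p -> epi_g tail head c o d q -> 0 < l < 1 ->
  comb l p q = (w, cP) -> p = (w, cP) /\ q = (w, cP).
Proof.
move=> gp gq l01 pq.
have supp oj : on_P oj -> p.2 = cP + dotT (probe_toll oj) w - dotT (probe_toll oj) p.1.
  by move=> ojP; apply: epi_g_supporting (probe_toll_ge0 oj) (probe_active ojP) gp gq l01 pq.
case: p q gp gq pq supp => [p1 rp] [q1 rq]; rewrite /epi_g /= => gp gq [w_comb r_comb] supp.
have [_ l_lt1] := andP l01.
have w_i i : l * p1 i + (1 - l) * q1 i = w i by rewrite -w_comb.
have w_off i : val i \notin P -> w i = 0 by move=> iP; rewrite /arc_count (count_memPn iP).
have p1_off i : val i \notin P -> p1 i = 0.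
  move=> iP; apply: (convex_comb_eq0 (b := q1 i) l01); rewrite ?(epi_g_ge0 gp) ?(epi_g_ge0 gq) //.
  by rewrite w_i w_off.
have rpE : rp = cP.
  by have := supp None isT; rewrite (dotT_probe_None w_off) (dotT_probe_None p1_off); lra.
have p1E : p1 = w.
  apply/funext => i; have [iP|iP] := boolP (val i \in P); last by rewrite p1_off ?w_off.
  have := supp (Some i) iP; rewrite (dotT_probe_Some w_off) // (dotT_probe_Some p1_off) // rpE.
  move=> eps_eq; have : eps * (w i - p1 i) = 0 by rewrite mulrBr; lra.
  by move/eqP; rewrite mulf_eq0 gt_eqF //= subr_eq0 => /eqP.
have q1E : q1 = w by apply/funext => i; apply: (convex_comb_eq l_lt1); rewrite -{1}p1E w_i.
have rqE : rq = cP by apply: (convex_comb_eq l_lt1); rewrite -{1}rpE.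
by rewrite p1E q1E rpE rqE.
Qed.

End Probes.

Lemma face_candidate : is_face (epi_g tail head c o d) [set (w, cP)]%classic.
Proof.
have [eps /andP [eps_gt0 eps_le1] eps_gap] := cost_gap.
split; first by move=> _ ->; exact: g_arc_count_le Pts.1.
split; first by move=> _ _ l -> -> _; rewrite /comb /=; congr (_, _); first apply/funext=> i; ring.
by move=> p q l gp gq l01 /(epi_g_extreme eps_gt0 eps_le1 eps_gap gp gq l01).
Qed.
End Candidate.

End Network.

Section Singletons.
Variables (R : realType) (A : finType) (A1 : {set A}).

Lemma proj_w_set1 (w : tarc A1 -> R) r : proj_w [set (w, r)]%classic = [set w]%classic.
Proof. by apply/funext => v; apply/propext; split=> [[r' [<-]]|->]; last exists r. Qed.

Lemma dir_aff_set1 (p : @pt R A A1) z : dir_aff [set p]%classic z -> z.2 = 0.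
Proof.
have aff_snd u : aff [set p]%classic u -> u.2 = p.2.
  move=> [m [pk [lam [pkp [lam1 ->]]]]] /=.
  by under eq_bigr => k _ do rewrite (pkp k); rewrite -mulr_suml lam1 mul1r.
by move=> [u [v [/aff_snd u2 [/aff_snd v2 ->]]]] /=; rewrite u2 v2 subrr.
Qed.

End Singletons.

Theorem theorem3 (R : realType) (V A : finType) (tail head : A -> V)
  (c : A -> R) (A1 : {set A}) (o d : V) :
  (forall a, 0 <= c a) ->
  A1 != finset.set0 ->
  A1 \proper [set: A] ->
  o != d ->
  toll_free_path tail head A1 o d ->
  exists (w t : tarc A1 -> R),
    @strongly_bilevel_feasible R V A tail head c A1 o d w /\
    @cbp_optimal R V A tail head c A1 o d w t.
Proof.
move=> c_ge0 _ _ _ toll_free.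
have [P [t [t_ge0 Pt sP Pmax Pfew]]] := max_revenue_pair_fewest_tolls c_ge0 toll_free.
have w_ge0 i : 0 <= arc_count R P i by rewrite ler0n.
exists (arc_count R P), t; split.
  split=> //; exists [set (arc_count R P, cost c P)]%classic.
  split; first exact: face_candidate.
  by split; [exact: proj_w_set1 | move/dir_aff_set1/eqP; rewrite oner_eq0].
split=> //; split; first exact: Tset_arc_count.
move=> w' t' w'_ge0 t'_opt; have [y [[t'_ge0 _] _]] := t'_opt.
have [Q [Qt' _ le_Q]] := Tset_active_walk c_ge0 toll_free w'_ge0 t'_opt.
by rewrite -toll_dotT (le_trans le_Q) ?Pmax.
Qed.
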